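(* Let $\mathcal{A}$ be a finite-dimensional $\mathbb{C}^*$-weak Hopf algebra, let $\rho:\mathcal{A}\to M_{d_\rho}(\mathbb{C})$ be a $*$-representation, and let $(v_{ij})_{1\le i,j\le d_v}$ be a corepresentation of $\mathcal{A}$ with $S(v_{ij})=v_{ji}^*$ for all $i,j$. Define operators $W:\mathbb{C}^{d_\rho}\otimes\mathbb{C}^{d_v}\to\mathbb{C}^{d_v}\otimes\mathbb{C}^{d_\rho}$, $P$ on $\mathbb{C}^{d_v}\otimes\mathbb{C}^{d_\rho}$ and $Q$ on $\mathbb{C}^{d_\rho}\otimes\mathbb{C}^{d_v}$ by $$\langle i,a|W|b,j\rangle=\rho_{ab}(v_{ij}),\qquad \langle i,a|P|j,b\rangle=\sum\epsilon(1_{(1)}v_{ij})\,\rho_{ab}(1_{(2)}),\qquad \langle a,i|Q|b,j\rangle=\sum\rho_{ab}(1_{(1)})\,\epsilon(v_{ij}1_{(2)}),$$ where $\Delta(1)=\sum1_{(1)}\otimes1_{(2)}$. Then $P$ and $Q$ are orthogonal projections ($P^2=P=P^\dagger$, $Q^2=Q=Q^\dagger$), $WW^\dagger=P$ and $W^\dagger W=Q$, and there exists a unitary $U:\mathbb{C}^{d_\rho}\otimes\mathbb{C}^{d_v}\to\mathbb{C}^{d_v}\otimes\mathbb{C}^{d_\rho}$ with $W=PU=UQ$.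
   Context: A weak bialgebra is a finite-dimensional unital associative algebra and coassociative counital coalgebra with $\Delta(xy)=\Delta(x)\Delta(y)$ and, in Sweedler notation, $\Delta^{(2)}(1)=(1\otimes\Delta(1))(\Delta(1)\otimes1)=(\Delta(1)\otimes1)(1\otimes\Delta(1))$ and $\epsilon(xyz)=\sum\epsilon(xy_{(1)})\epsilon(y_{(2)}z)=\sum\epsilon(xy_{(2)})\epsilon(y_{(1)}z)$ for all $x,y,z$. Set $\epsilon_s(x)=\sum1_{(1)}\epsilon(x1_{(2)})$ and $\epsilon_t(x)=\sum\epsilon(1_{(1)}x)1_{(2)}$. A weak Hopf algebra is a weak bialgebra with a linear map $S$ such that $\sum S(x_{(1)})x_{(2)}=\epsilon_s(x)$, $\sum x_{(1)}S(x_{(2)})=\epsilon_t(x)$, $\sum S(x_{(1)})x_{(2)}S(x_{(3)})=S(x)$. It is a $*$-weak Hopf algebra if there is an antilinear involution $*$ with $(xy)^*=y^*x^*$ and $\Delta(x^* )=\Delta(x)^*$, and a $\mathbb{C}^*$-weak Hopf algebra if additionally it has a faithful $*$-representation. A $*$-representation is a unital homomorphism with $\rho(x^* )=\rho(x)^\dagger$. A corepresentation is a matrix $(v_{ij})$ of elements of $\mathcal{A}$ with $\Delta(v_{ij})=\sum_kv_{ik}\otimes v_{kj}$ and $\epsilon(v_{ij})=\delta_{ij}$. *)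

From HB Require Import structures.
From mathcomp Require Import all_boot all_order all_algebra all_field.
From mathcomp Require Import complex reals.
Set Implicit Arguments. Unset Strict Implicit. Unset Printing Implicit Defensive.
Import Order.TTheory GRing.Theory Num.Theory.
Local Open Scope ring_scope.

Definition adjmx (C : numClosedFieldType) m n (M : 'M[C]_(m, n)) : 'M[C]_(n, m) :=
  (map_mx Num.conj M)^T.

Definition unitary_op (C : numClosedFieldType) m n (U : 'M[C]_(m, n)) : Prop :=
  U *m adjmx U = 1%:M /\ adjmx U *m U = 1%:M.

Section WeakHopf.
Variable C : numClosedFieldType.
Variable A : falgType C.

(* Elements of A (x) A and A (x) A (x) A are represented by finite sums of
   elementary tensors (Sweedler representatives), given as sequences.
   Two representatives denote the same tensor iff all products of linear
   functionals agree on them (this is exactly equality in A (x) A). *)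
Definition teq2 (s t : seq (A * A)) : Prop :=
  forall f g : {scalar A},
    \sum_(p <- s) f p.1 * g p.2 = \sum_(p <- t) f p.1 * g p.2.

Definition teq3 (s t : seq (A * A * A)) : Prop :=
  forall f g h : {scalar A},
    \sum_(p <- s) f p.1.1 * g p.1.2 * h p.2 =
    \sum_(p <- t) f p.1.1 * g p.1.2 * h p.2.

Variables (Delta : A -> seq (A * A)) (eps : A -> C) (S : A -> A) (star : A -> A).

Definition weak_bialgebra_axioms : Prop :=
  [/\
      (forall (a : C) (x y : A),
         teq2 (Delta (a *: x + y))
              ([seq (a *: p.1, p.2) | p <- Delta x] ++ Delta y)),
      (forall x : A,
         teq3 [seq (p.1, q.1, q.2) | p <- Delta x, q <- Delta p.2]
              [seq (q.1, q.2, p.2) | p <- Delta x, q <- Delta p.1]),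
      (forall (a : C) (x y : A), eps (a *: x + y) = a * eps x + eps y),
      (forall x : A, \sum_(p <- Delta x) eps p.1 *: p.2 = x /\
                     \sum_(p <- Delta x) eps p.2 *: p.1 = x) &
      [/\
      (forall x y : A,
         teq2 (Delta (x * y)) [seq (p.1 * q.1, p.2 * q.2) | p <- Delta x, q <- Delta y]),
      (* Delta^(2)(1) = (1 (x) Delta(1))(Delta(1) (x) 1) = (Delta(1) (x) 1)(1 (x) Delta(1)) *)
      (teq3 [seq (p.1, q.1, q.2) | p <- Delta 1, q <- Delta p.2]
            [seq (q.1, p.1 * q.2, p.2) | p <- Delta 1, q <- Delta 1] /\
       teq3 [seq (p.1, q.1, q.2) | p <- Delta 1, q <- Delta p.2]
            [seq (q.1, q.2 * p.1, p.2) | p <- Delta 1, q <- Delta 1]) &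
      (forall x y z : A,
         eps (x * y * z) = \sum_(p <- Delta y) eps (x * p.1) * eps (p.2 * z) /\
         eps (x * y * z) = \sum_(p <- Delta y) eps (x * p.2) * eps (p.1 * z))]].

Definition eps_s (x : A) : A := \sum_(p <- Delta 1) eps (x * p.2) *: p.1.
Definition eps_t (x : A) : A := \sum_(p <- Delta 1) eps (p.1 * x) *: p.2.

Definition antipode_axioms : Prop :=
  [/\ (forall (a : C) (x y : A), S (a *: x + y) = a *: S x + S y),
      (forall x : A, \sum_(p <- Delta x) S p.1 * p.2 = eps_s x),
      (forall x : A, \sum_(p <- Delta x) p.1 * S p.2 = eps_t x) &
      (forall x : A,
         \sum_(p <- Delta x) \sum_(q <- Delta p.2) S p.1 * q.1 * S q.2 = S x)].

Definition star_axioms : Prop :=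
  [/\ (forall (a : C) (x y : A), star (a *: x + y) = Num.conj a *: star x + star y),
      (forall x : A, star (star x) = x),
      (forall x y : A, star (x * y) = star y * star x) &
      (forall x : A, teq2 (Delta (star x)) [seq (star p.1, star p.2) | p <- Delta x])].

Definition star_rep (d : nat) (rho : A -> 'M[C]_d) : Prop :=
  [/\ (forall (a : C) (x y : A), rho (a *: x + y) = a *: rho x + rho y),
      rho 1 = 1%:M,
      (forall x y : A, rho (x * y) = rho x *m rho y) &
      (forall x : A, rho (star x) = adjmx (rho x))].

Definition Cstar_weak_Hopf : Prop :=
  [/\ weak_bialgebra_axioms, antipode_axioms, star_axioms &
      exists (N : nat) (rho : A -> 'M[C]_N), star_rep rho /\ injective rho].

Definition corep (dv : nat) (v : 'I_dv -> 'I_dv -> A) : Prop :=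
  forall i j : 'I_dv,
    teq2 (Delta (v i j)) [seq (v i k, v k j) | k <- enum 'I_dv] /\
    eps (v i j) = (i == j)%:R.

(* The operators W, P, Q, with C^m (x) C^n identified with C^(m*n) via
   mxvec_index (|i> (x) |a>  ~  mxvec_index i a). *)
Definition Wop dr dv (rho : A -> 'M[C]_dr) (v : 'I_dv -> 'I_dv -> A)
  : 'M[C]_(dv * dr, dr * dv) :=
  \sum_(i < dv) \sum_(a < dr) \sum_(b < dr) \sum_(j < dv)
     rho (v i j) a b *: delta_mx (mxvec_index i a) (mxvec_index b j).

Definition Pop dr dv (rho : A -> 'M[C]_dr) (v : 'I_dv -> 'I_dv -> A)
  : 'M[C]_(dv * dr) :=
  \sum_(i < dv) \sum_(a < dr) \sum_(j < dv) \sum_(b < dr)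
     (\sum_(p <- Delta 1) eps (p.1 * v i j) * rho p.2 a b)
       *: delta_mx (mxvec_index i a) (mxvec_index j b).

Definition Qop dr dv (rho : A -> 'M[C]_dr) (v : 'I_dv -> 'I_dv -> A)
  : 'M[C]_(dr * dv) :=
  \sum_(a < dr) \sum_(i < dv) \sum_(b < dr) \sum_(j < dv)
     (\sum_(p <- Delta 1) rho p.1 a b * eps (v i j * p.2))
       *: delta_mx (mxvec_index a i) (mxvec_index b j).

End WeakHopf.

From HB Require Import structures.
From mathcomp Require Import all_boot all_order all_algebra all_field.
From mathcomp Require Import complex reals.
Import Order.TTheory GRing.Theory Num.Theory.
Local Open Scope ring_scope.
Set Implicit Arguments.
Unset Strict Implicit.
Unset Printing Implicit Defensive.

(* Entrywise, W W^dagger and W^dagger W are rho applied to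
   sum_k v_ik S(v_kj) and sum_k S(v_ik) v_kj, because S(v_ij) = v_ji^* turns
   the adjoint of rho(v) into rho(S v); the antipode axioms, applied to the
   comultiplication of a corepresentation, identify these sums with
   eps_t(v_ij) and eps_s(v_ij), i.e. with P and Q.  The third antipode axiom
   gives W^dagger P = W^dagger, so W is a partial isometry and P, Q are its
   range and support projections.  Since W is square, 1 - P and 1 - Q have
   equal rank, and adding to W a partial isometry from the range of 1 - Q
   onto that of 1 - P yields the unitary U. *)

Section Adjoint.
Variable C : numClosedFieldType.

Lemma adjmxM m n p (X : 'M[C]_(m, n)) (Y : 'M[C]_(n, p)) :
  adjmx (X *m Y) = adjmx Y *m adjmx X.
Proof. by rewrite /adjmx map_mxM trmx_mul. Qed.

Lemma adjmxK m n (X : 'M[C]_(m, n)) : adjmx (adjmx X) = X.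
Proof. by apply/matrixP=> i j; rewrite !mxE conjCK. Qed.

Lemma adjmxD m n (X Y : 'M[C]_(m, n)) : adjmx (X + Y) = adjmx X + adjmx Y.
Proof. by apply/matrixP=> i j; rewrite !mxE rmorphD. Qed.

Lemma adjmxB m n (X Y : 'M[C]_(m, n)) : adjmx (X - Y) = adjmx X - adjmx Y.
Proof. by apply/matrixP=> i j; rewrite !mxE rmorphB. Qed.

Lemma adjmx0 m n : adjmx (0 : 'M[C]_(m, n)) = 0.
Proof. by apply/matrixP=> i j; rewrite !mxE rmorph0. Qed.

Lemma adjmx1 n : adjmx (1%:M : 'M[C]_n) = 1%:M.
Proof. by apply/matrixP=> i j; rewrite !mxE eq_sym rmorph_nat. Qed.

Definition orthoproj n (E : 'M[C]_n) := E *m E = E /\ adjmx E = E.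

Lemma orthoproj_compl n (E : 'M[C]_n) : orthoproj E -> orthoproj (1%:M - E).
Proof.
move=> [EE aE]; split; last by rewrite adjmxB adjmx1 aE.
by rewrite mulmxBl mul1mx mulmxBr mulmx1 EE subrr subr0.
Qed.

Lemma mxrank_idem_compl n (E : 'M[C]_n) :
  E *m E = E -> (\rank (1%:M - E)%R + \rank E)%N = n.
Proof.
move=> EE; apply/eqP; rewrite eqn_leq; apply/andP; split.
  have := mxrank_mul_min (1%:M - E) E.
  by rewrite mulmxBl mul1mx EE subrr mxrank0 leqn0 subn_eq0.
by have := mxrank_add (1%:M - E) E; rewrite subrK mxrank1.
Qed.

Lemma mxrank_ginv_mull m n (X : 'M[C]_(m, n)) (Y : 'M[C]_(n, m)) :
  X *m Y *m X = X -> \rank (X *m Y) = \rank X.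
Proof.
move=> XYX; apply/eqP; rewrite eqn_leq mxrankM_maxl /=.
by rewrite -{1}XYX mxrankM_maxl.
Qed.

Lemma mxrank_ginv_mulr m n (X : 'M[C]_(m, n)) (Y : 'M[C]_(n, m)) :
  X *m Y *m X = X -> \rank (Y *m X) = \rank X.
Proof.
move=> XYX; apply/eqP; rewrite eqn_leq mxrankM_maxr /=.
by rewrite -{1}XYX -mulmxA mxrankM_maxr.
Qed.

Lemma orthoproj_factor n (E : 'M[C]_n) : orthoproj E ->
  exists B : 'M[C]_(\rank E, n), B *m adjmx B = 1%:M /\ adjmx B *m B = E.
Proof.
move=> [EE aE].
set B := spectral.schmidt (row_base E).
have BBa : B *m adjmx B = 1%:M.
  rewrite /adjmx map_trmx; apply/spectral.unitarymxP.
  exact/spectral.schmidt_unitarymx/rank_leq_col.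
have BE : (B :=: E)%MS.
  apply: eqmx_trans (eq_row_base E).
  exact/spectral.eqmx_schmidt_free/row_base_free.
exists B; split => //.
have [D BDE] : exists D, B = D *m E by apply/submxP; rewrite BE.
have [Y EYB] : exists Y, E = Y *m B by apply/submxP; rewrite -BE.
have BE_B : B *m E = B by rewrite BDE -mulmxA EE.
have E_BaB : E *m (adjmx B *m B) = E.
  by rewrite {1}EYB -mulmxA (mulmxA B) BBa mul1mx -EYB.
by rewrite -{1}BE_B adjmxM aE -mulmxA E_BaB.
Qed.

Lemma orthoproj_equiv m n (E : 'M[C]_m) (F : 'M[C]_n) :
  orthoproj E -> orthoproj F -> \rank E = \rank F ->
  exists V : 'M[C]_(m, n),
    [/\ V *m adjmx V = E, adjmx V *m V = F, E *m V = V & V *m F = V].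
Proof.
move=> pE pF rEF.
have [B1 [B1Ba B1aB]] := orthoproj_factor pE.
have [B2 [B2Ba B2aB]] := orthoproj_factor pF.
move: B2 B2Ba B2aB; rewrite -rEF => B2 B2Ba B2aB.
exists (adjmx B1 *m B2); split.
- by rewrite adjmxM adjmxK mulmxA -(mulmxA _ B2) B2Ba mulmx1.
- by rewrite adjmxM adjmxK mulmxA -(mulmxA _ B1) B1Ba mulmx1.
- transitivity (adjmx B1 *m B1 *m (adjmx B1 *m B2)); first by rewrite B1aB.
  by rewrite -!mulmxA (mulmxA B1) B1Ba mul1mx.
- transitivity (adjmx B1 *m B2 *m (adjmx B2 *m B2)); first by rewrite B2aB.
  by rewrite !mulmxA -(mulmxA _ B2) B2Ba mulmx1.
Qed.

Lemma partial_isometry_orthoproj m n (W : 'M[C]_(m, n)) :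
  W *m adjmx W *m W = W -> orthoproj (W *m adjmx W) /\ orthoproj (adjmx W *m W).
Proof.
move=> WWW; split; split; rewrite ?adjmxM ?adjmxK //.
  by rewrite mulmxA WWW.
by rewrite -mulmxA (mulmxA W) WWW.
Qed.

Lemma partial_isometry_unitary_ext m n (W : 'M[C]_(m, n)) :
  m = n -> W *m adjmx W *m W = W ->
  exists U : 'M[C]_(m, n), unitary_op U /\
    W = W *m adjmx W *m U /\ W = U *m (adjmx W *m W).
Proof.
move=> emn WWW.
have [[PP aP] [QQ aQ]] := partial_isometry_orthoproj WWW.
have rPQ : \rank (1%:M - W *m adjmx W) = \rank (1%:M - adjmx W *m W).
  apply: (@addIn (\rank W)).
  rewrite -{1}(mxrank_ginv_mull WWW) mxrank_idem_compl //.
  by rewrite -(mxrank_ginv_mulr WWW) mxrank_idem_compl.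
have [V [VVa VaV PV VQ]] := orthoproj_equiv
  (orthoproj_compl (conj PP aP)) (orthoproj_compl (conj QQ aQ)) rPQ.
have aWP : adjmx W *m (W *m adjmx W) = adjmx W.
  by rewrite -[in RHS]WWW !adjmxM adjmxK.
have aWV : adjmx W *m V = 0.
  by rewrite -PV mulmxA mulmxBr mulmx1 aWP subrr mul0mx.
have VaW : V *m adjmx W = 0.
  by rewrite -VQ -mulmxA mulmxBl mul1mx -mulmxA aWP subrr mulmx0.
have WVa : W *m adjmx V = 0 by rewrite -[W]adjmxK -adjmxM VaW adjmx0.
have aVW : adjmx V *m W = 0 by rewrite -[W]adjmxK -adjmxM aWV adjmx0.
exists (W + V); split; [split|split].
- by rewrite adjmxD mulmxDl !mulmxDr VVa WVa VaW addr0 add0r addrC subrK.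
- by rewrite adjmxD mulmxDl !mulmxDr VaV aWV aVW addr0 add0r addrC subrK.
- by rewrite mulmxDr WWW -mulmxA aWV mulmx0 addr0.
- by rewrite mulmxDl mulmxA WWW mulmxA VaW mul0mx addr0.
Qed.

End Adjoint.

Section LinearFun.
Variables (R : pzRingType) (U V : lmodType R) (f : U -> V).
Hypothesis f_linear : forall a x y, f (a *: x + y) = a *: f x + f y.

Lemma linear_fun0 : f 0 = 0.
Proof.
apply: (addrI (f 0)); rewrite addr0.
by rewrite -{1}(scale1r (f 0)) -f_linear scale1r addr0.
Qed.

Lemma linear_funD x y : f (x + y) = f x + f y.
Proof. by rewrite -{1}(scale1r x) f_linear scale1r. Qed.

Lemma linear_funZ a x : f (a *: x) = a *: f x.
Proof. by rewrite -(addr0 (a *: x)) f_linear linear_fun0 addr0. Qed.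

Lemma linear_fun_sum (I : Type) (r : seq I) (P : pred I) (F : I -> U) :
  f (\sum_(i <- r | P i) F i) = \sum_(i <- r | P i) f (F i).
Proof. exact: (big_morph f linear_funD linear_fun0). Qed.

End LinearFun.

Section Tensors.
Variables (C : numClosedFieldType) (A : falgType C).

(* Expanding both arguments in a basis of A, a bilinear map is a combination
   of products of coordinate functionals, which is what teq2 compares. *)
Lemma teq2_bilinear (V : lmodType C) (B : A -> A -> V) :
  (forall y a x1 x2, B (a *: x1 + x2) y = a *: B x1 y + B x2 y) ->
  (forall x a y1 y2, B x (a *: y1 + y2) = a *: B x y1 + B x y2) ->
  forall s t, teq2 s t -> \sum_(p <- s) B p.1 p.2 = \sum_(p <- t) B p.1 p.2.
Proof.
move=> BlinL BlinR.
set e := vbasis (fullv : {vspace A}).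
have B_coord x y : B x y =
    \sum_i \sum_j (coord e i x * coord e j y) *: B e`_i e`_j.
  rewrite {1}(coord_vbasis (memvf x)) (linear_fun_sum (BlinL y)).
  apply: eq_bigr => i _.
  rewrite (linear_funZ (BlinL y)) {1}(coord_vbasis (memvf y)).
  rewrite (linear_fun_sum (BlinR _)) scaler_sumr.
  by apply: eq_bigr => j _; rewrite (linear_funZ (BlinR _)) scalerA.
have sum_coord u : \sum_(p <- u) B p.1 p.2 = \sum_i \sum_j
    (\sum_(p <- u) coord e i p.1 * coord e j p.2) *: B e`_i e`_j.
  under eq_bigr do rewrite B_coord.
  rewrite exchange_big /=; apply: eq_bigr => i _.
  by rewrite exchange_big /=; apply: eq_bigr => j _; rewrite scaler_suml.
move=> s t st; rewrite !sum_coord.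
by apply: eq_bigr => i _; apply: eq_bigr => j _; rewrite st.
Qed.

End Tensors.

Section CorepAntipode.
Variables (C : numClosedFieldType) (A : falgType C).
Variables (Delta : A -> seq (A * A)) (eps : A -> C) (S : A -> A).
Hypothesis eps_linear : forall a x y, eps (a *: x + y) = a * eps x + eps y.
Hypothesis S_linear : forall a x y, S (a *: x + y) = a *: S x + S y.
Hypothesis antipode_s :
  forall x, \sum_(p <- Delta x) S p.1 * p.2 = eps_s Delta eps x.
Hypothesis antipode_t :
  forall x, \sum_(p <- Delta x) p.1 * S p.2 = eps_t Delta eps x.
Hypothesis antipode_SidS : forall x,
  \sum_(p <- Delta x) \sum_(q <- Delta p.2) S p.1 * q.1 * S q.2 = S x.
Variables (dv : nat) (v : 'I_dv -> 'I_dv -> A).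
Hypothesis v_corep : corep Delta eps v.

Lemma eps_t_linear a x y :
  eps_t Delta eps (a *: x + y) = a *: eps_t Delta eps x + eps_t Delta eps y.
Proof.
rewrite /eps_t scaler_sumr -big_split /=; apply: eq_bigr => p _.
by rewrite mulrDr -scalerAr eps_linear scalerDl scalerA.
Qed.

Lemma corep_sum_bilinear (B : A -> A -> A) i j :
  (forall y a x1 x2, B (a *: x1 + x2) y = a *: B x1 y + B x2 y) ->
  (forall x a y1 y2, B x (a *: y1 + y2) = a *: B x y1 + B x y2) ->
  \sum_(p <- Delta (v i j)) B p.1 p.2 = \sum_k B (v i k) (v k j).
Proof.
move=> BlinL BlinR.
by rewrite (teq2_bilinear BlinL BlinR (v_corep i j).1) big_map big_enum.
Qed.

Lemma corep_mul_antipode i j :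
  \sum_k v i k * S (v k j) = eps_t Delta eps (v i j).
Proof.
rewrite -antipode_t (corep_sum_bilinear (B := fun x y => x * S y)) //.
- by move=> y a x1 x2; rewrite mulrDl scalerAl.
- by move=> x a y1 y2; rewrite S_linear mulrDr scalerAr.
Qed.

Lemma corep_antipode_mul i j :
  \sum_k S (v i k) * v k j = eps_s Delta eps (v i j).
Proof.
rewrite -antipode_s (corep_sum_bilinear (B := fun x y => S x * y)) //.
- by move=> y a x1 x2; rewrite S_linear mulrDl scalerAl.
- by move=> x a y1 y2; rewrite mulrDr scalerAr.
Qed.

Lemma antipode_mul_eps_t x :
  \sum_(p <- Delta x) S p.1 * eps_t Delta eps p.2 = S x.
Proof.
rewrite -antipode_SidS; apply: eq_bigr => p _.
by rewrite -antipode_t mulr_sumr; apply: eq_bigr => q _; rewrite mulrA.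
Qed.

Lemma corep_antipode_mul_eps_t i j :
  \sum_k S (v i k) * eps_t Delta eps (v k j) = S (v i j).
Proof.
rewrite -antipode_mul_eps_t.
rewrite (corep_sum_bilinear (B := fun x y => S x * eps_t Delta eps y)) //.
- by move=> y a x1 x2; rewrite S_linear mulrDl scalerAl.
- by move=> x a y1 y2; rewrite eps_t_linear mulrDr scalerAr.
Qed.

End CorepAntipode.

Lemma mxvec_index_eq m n (x x' : 'I_m) (y y' : 'I_n) :
  (mxvec_index x y == mxvec_index x' y') = (x == x') && (y == y').
Proof.
by rewrite (inj_eq (@cast_ord_inj _ _ _)) (inj_eq enum_rank_inj) xpair_eqE.
Qed.

Lemma sum_mxvec_index (V : nmodType) m n (F : 'I_(m * n) -> V) :
  \sum_k F k = \sum_x \sum_y F (mxvec_index x y).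
Proof.
rewrite pair_bigA (reindex (uncurry (@mxvec_index m n))) /=.
  by apply: eq_bigr => -[].
by have [g gK Kg] := curry_mxvec_bij m n; exists g.
Qed.

Lemma sum_delta_mxvecE (R : pzRingType) m1 m2 n1 n2
    (f : 'I_m1 -> 'I_m2 -> 'I_n1 -> 'I_n2 -> R) x y z w :
  (\sum_x' \sum_y' \sum_z' \sum_w' f x' y' z' w' *:
      delta_mx (mxvec_index x' y') (mxvec_index z' w') : 'M_(m1 * m2, n1 * n2))
    (mxvec_index x y) (mxvec_index z w) = f x y z w.
Proof.
rewrite !pair_bigA summxE (big_only1 (x, y, z, w)) //=.
  by rewrite !mxE !mxvec_index_eq !eqxx mulr1.
move=> [[[x' y'] z'] w'] /= neq _; rewrite !mxE !mxvec_index_eq.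
suff -> : [&& (x == x') && (y == y'), z == z' & w == w'] = false.
  by rewrite mulr0.
by apply: contraNF neq => /and3P[/andP[/eqP<- /eqP<-] /eqP<- /eqP<-].
Qed.

Section Operators.
Variables (C : numClosedFieldType) (A : falgType C).
Variables (Delta : A -> seq (A * A)) (eps : A -> C) (S star : A -> A).
Variables (dr : nat) (rho : A -> 'M[C]_dr).
Hypothesis rho_linear : forall a x y, rho (a *: x + y) = a *: rho x + rho y.
Hypothesis rho_mul : forall x y, rho (x * y) = rho x *m rho y.
Hypothesis rho_star : forall x, rho (star x) = adjmx (rho x).
Variables (dv : nat) (v : 'I_dv -> 'I_dv -> A).

Local Notation W := (Wop rho v).
Local Notation P := (Pop Delta eps rho v).
Local Notation Q := (Qop Delta eps rho v).

Lemma rho_sum_coef (F : 'I_dv -> A) a b :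
  rho (\sum_k F k) a b = \sum_k rho (F k) a b.
Proof. by rewrite (linear_fun_sum rho_linear) summxE. Qed.

Lemma conj_rho_coef x a b : Num.conj (rho x a b) = rho (star x) b a.
Proof. by rewrite rho_star !mxE. Qed.

Lemma Wop_coef i a b j :
  W (mxvec_index i a) (mxvec_index b j) = rho (v i j) a b.
Proof. exact: (sum_delta_mxvecE (fun i a b j => rho (v i j) a b)). Qed.

Lemma Pop_coef i a j b :
  P (mxvec_index i a) (mxvec_index j b) = rho (eps_t Delta eps (v i j)) a b.
Proof.
rewrite (sum_delta_mxvecE
  (fun i a j b => \sum_(p <- Delta 1) eps (p.1 * v i j) * rho p.2 a b)).
rewrite /eps_t (linear_fun_sum rho_linear) summxE; apply: eq_bigr => p _.
by rewrite (linear_funZ rho_linear) mxE.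
Qed.

Lemma Qop_coef a i b j :
  Q (mxvec_index a i) (mxvec_index b j) = rho (eps_s Delta eps (v i j)) a b.
Proof.
rewrite (sum_delta_mxvecE
  (fun a i b j => \sum_(p <- Delta 1) rho p.1 a b * eps (v i j * p.2))).
rewrite /eps_s (linear_fun_sum rho_linear) summxE; apply: eq_bigr => p _.
by rewrite (linear_funZ rho_linear) mxE mulrC.
Qed.

Hypothesis S_linear : forall a x y, S (a *: x + y) = a *: S x + S y.
Hypothesis antipode_s :
  forall x, \sum_(p <- Delta x) S p.1 * p.2 = eps_s Delta eps x.
Hypothesis antipode_t :
  forall x, \sum_(p <- Delta x) p.1 * S p.2 = eps_t Delta eps x.
Hypothesis v_corep : corep Delta eps v.
Hypothesis S_v : forall i j, S (v i j) = star (v j i).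

Lemma Wop_mul_adj : W *m adjmx W = P.
Proof.
apply/matrixP => r c; case/mxvec_indexP: r => i a; case/mxvec_indexP: c => j b.
rewrite Pop_coef -(corep_mul_antipode S_linear antipode_t v_corep) rho_sum_coef.
rewrite !mxE sum_mxvec_index exchange_big /=; apply: eq_bigr => k _.
rewrite S_v rho_mul mxE; apply: eq_bigr => c _.
by rewrite !mxE !Wop_coef conj_rho_coef.
Qed.

Lemma adj_Wop_mul : adjmx W *m W = Q.
Proof.
apply/matrixP => r c; case/mxvec_indexP: r => a i; case/mxvec_indexP: c => b j.
rewrite Qop_coef -(corep_antipode_mul S_linear antipode_s v_corep) rho_sum_coef.
rewrite !mxE sum_mxvec_index; apply: eq_bigr => k _.
rewrite S_v rho_mul mxE; apply: eq_bigr => c _.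
by rewrite !mxE !Wop_coef conj_rho_coef.
Qed.

Hypothesis eps_linear : forall a x y, eps (a *: x + y) = a * eps x + eps y.
Hypothesis antipode_SidS : forall x,
  \sum_(p <- Delta x) \sum_(q <- Delta p.2) S p.1 * q.1 * S q.2 = S x.

Lemma adj_Wop_mul_Pop : adjmx W *m P = adjmx W.
Proof.
apply/matrixP => r c; case/mxvec_indexP: r => a i; case/mxvec_indexP: c => j b.
rewrite !mxE Wop_coef conj_rho_coef -S_v.
rewrite -(corep_antipode_mul_eps_t eps_linear S_linear antipode_t antipode_SidS
  v_corep).
rewrite rho_sum_coef sum_mxvec_index; apply: eq_bigr => k _.
rewrite S_v rho_mul mxE; apply: eq_bigr => c _.
by rewrite !mxE Wop_coef Pop_coef conj_rho_coef.
Qed.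

Lemma Wop_partial_isometry : W *m adjmx W *m W = W.
Proof.
have := congr1 (@adjmx _ _ _) adj_Wop_mul_Pop.
by rewrite -Wop_mul_adj !adjmxM !adjmxK.
Qed.

End Operators.

Theorem mainTheorem6 (R : realType) (A : falgType R[i])
    (Delta : A -> seq (A * A)) (eps : A -> R[i]) (S : A -> A) (star : A -> A)
    (HA : Cstar_weak_Hopf Delta eps S star)
    (dr : nat) (rho : A -> 'M[R[i]]_dr) (Hrho : star_rep star rho)
    (dv : nat) (v : 'I_dv -> 'I_dv -> A) (Hv : corep Delta eps v)
    (HSv : forall i j : 'I_dv, S (v i j) = star (v j i)) :
  let W := Wop rho v in
  let P := Pop Delta eps rho v in
  let Q := Qop Delta eps rho v in
  [/\ (P *m P = P /\ adjmx P = P), (Q *m Q = Q /\ adjmx Q = Q),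
      W *m adjmx W = P, adjmx W *m W = Q &
      exists U : 'M[R[i]]_(dv * dr, dr * dv),
        unitary_op U /\ W = P *m U /\ W = U *m Q].
Proof.
move=> W P Q; rewrite {}/W {}/P {}/Q.
case: HA => [[_ _ eps_linear _ _] [S_linear antipode_s antipode_t antipode_SidS]
  _ _].
case: Hrho => [rho_linear _ rho_mul rho_star].
have WWa := Wop_mul_adj rho_linear rho_mul rho_star S_linear antipode_t Hv HSv.
have WaW := adj_Wop_mul rho_linear rho_mul rho_star S_linear antipode_s Hv HSv.
have WWW := Wop_partial_isometry rho_linear rho_mul rho_star S_linear antipode_t
  Hv HSv eps_linear antipode_SidS.
have [pP pQ] := partial_isometry_orthoproj WWW.
have [U [U_unitary [WPU WUQ]]] :=
  partial_isometry_unitary_ext (mulnC dv dr) WWW.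
rewrite WWa WaW in pP pQ WPU WUQ.
by split => //; exists U.
Qed.
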